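(* Let $\mathcal{T}$ be a trim transducer. If $[\![\mathcal{T}]\!]$ is multi-sequential, then $\mathcal{T}$ satisfies the weak twinning property.
   Context: A transducer is a tuple $\mathcal{T}=(Q,E,I,F,f)$ with finite state set $Q$, initial states $I$, final states $F$, transitions $E\subseteq Q\times\Sigma\times\Gamma^*\times Q$ and final output function $f:F\to\Gamma^*$. We write $p\xrightarrow{u\mid w}q$ if there is a run from $p$ to $q$ reading $u$ and outputting $w$. $[\![\mathcal{T}]\!]=\{(u,wf(t)) : i\xrightarrow{u\mid w}t,\ i\in I,\ t\in F\}$. $\mathcal{T}$ is trim if every state lies on some run from an initial to a final state. Sequential transducer: single initial state and at most one transition per (state, input letter); sequential function: realised by a sequential transducer; multi-sequential relation: finite union of sequential functions. $\Delta(v,w)=v^{-1}w$ in the free group over $\Gamma$. $\mathcal{T}$ satisfies the weak twinning property if for all states $q_1,q_2$, all $u,v\in\Sigma^*$ and $u_1,u_2,v_1,v_2\in\Gamma^*$ with $q_1\xrightarrow{u\mid u_1}q_1$, $q_1\xrightarrow{v\mid v_1}q_1$, $q_1\xrightarrow{u\mid u_2}q_2$, $q_2\xrightarrow{v\mid v_2}q_2$, one has $\Delta(u_1,u_2)=\Delta(u_1v_1,u_2v_2)$. *)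

From mathcomp Require Import all_boot.
Set Implicit Arguments. Unset Strict Implicit. Unset Printing Implicit Defensive.

Section Transducers.
Variables (Sigma Gamma : finType).

Record transducer := Transducer {
  state : finType;
  trans : seq (state * Sigma * seq Gamma * state);
  init  : {set state};
  final : {set state};
  fout  : state -> seq Gamma   (* only relevant on final states *)
}.

Inductive run (T : transducer) : state T -> seq Sigma -> seq Gamma -> state T -> Prop :=
| run_nil p : run p [::] [::] p
| run_cons p a w q u w' r :
    (p, a, w, q) \in trans T -> run q u w' r -> run p (a :: u) (w ++ w') r.

Definition sem (T : transducer) (u : seq Sigma) (w : seq Gamma) : Prop :=
  exists i t w0, [/\ i \in init T, t \in final T, run i u w0 t & w = w0 ++ @fout T t].

Definition trim (T : transducer) : Prop :=
  forall q : state T, exists i t u1 w1 u2 w2,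
    [/\ i \in init T, t \in final T, run i u1 w1 q & run q u2 w2 t].

Definition sequential (T : transducer) : Prop :=
  #|init T| = 1 /\
  forall e1 e2, e1 \in trans T -> e2 \in trans T ->
    e1.1.1.1 = e2.1.1.1 -> e1.1.1.2 = e2.1.1.2 -> e1 = e2.

Definition sequential_function (R : seq Sigma -> seq Gamma -> Prop) : Prop :=
  exists T : transducer, sequential T /\ forall u w, R u w <-> sem T u w.

Definition multi_sequential (R : seq Sigma -> seq Gamma -> Prop) : Prop :=
  exists (n : nat) (Rs : 'I_n -> seq Sigma -> seq Gamma -> Prop),
    (forall k, sequential_function (Rs k)) /\
    forall u w, R u w <-> exists k, Rs k u w.

(* Free group over Gamma: elements are freely reduced words over letters
   (a, b) with b = false for a and b = true for a^{-1}. *)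
Definition fletter := (Gamma * bool)%type.

Definition fpush (x : fletter) (s : seq fletter) : seq fletter :=
  match s with
  | y :: r => if (y.1 == x.1) && (y.2 != x.2) then r else x :: s
  | [::] => [:: x]
  end.

Definition freduce (s : seq fletter) : seq fletter := foldr fpush [::] s.

Definition finv (v : seq Gamma) : seq fletter := [seq (a, true) | a <- rev v].
Definition fword (v : seq Gamma) : seq fletter := [seq (a, false) | a <- v].

Definition Delta (v w : seq Gamma) : seq fletter := freduce (finv v ++ fword w).

Definition weak_twinning (T : transducer) : Prop :=
  forall (q1 q2 : state T) (u v : seq Sigma) (u1 u2 v1 v2 : seq Gamma),
    run q1 u u1 q1 -> run q1 v v1 q1 -> run q1 u u2 q2 -> run q2 v v2 q2 ->
    Delta u1 u2 = Delta (u1 ++ v1) (u2 ++ v2).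

End Transducers.

(* If the weak twinning property failed for loops [u|u1], [v|v1] on [q1] and
   [u|u2], [v|v2] from [q1] to [q2], the delays
   Delta (u1 v1^c) (u2 v2^c), c in N, would be pairwise distinct: two equal
   ones force the property, by combinatorics on words.  Now reach [q1] by
   [x|al] and leave [q2] by [y|be]; for an exponent vector (c_0, ..., c_n)
   the n+1 words x (u v^c_0) ... (u v^c_(j-1)) u v^c_j y are in the domain of
   [[T]], so two of them, j < j', are handled by the same one of the n
   sequential functions.  After their common prefix that sequential
   transducer is in a single state s, so the delay between the two outputs
   depends only on s and on the exponents after j, and yet it determines c_j.
   With exponents below M this maps M^(n+1) vectors injectively into a set
   of size O(M^n), which is absurd for large M. *)

From Pilot Require Import Defs.
From mathcomp Require Import all_boot zify.
From Stdlib Require List Classical_Prop ClassicalEpsilon.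
Set Implicit Arguments. Unset Strict Implicit. Unset Printing Implicit Defensive.

Section FreeReduction.
Variable Gamma : finType.
Implicit Types (s t l r : seq (fletter Gamma)) (x : fletter Gamma).

Definition letter_inv x : fletter Gamma := (x.1, ~~ x.2).

Fixpoint reduced s :=
  if s is x :: ((y :: _) as r) then ~~ ((y.1 == x.1) && (y.2 != x.2)) && reduced r
  else true.

Lemma reduced_behead x s : reduced (x :: s) -> reduced s.
Proof. by case: s => //= y r /andP[]. Qed.

Lemma fpush_reduced x t : reduced t -> reduced (fpush x t).
Proof.
case: t => //= y r red_yr; case: ifP => [_|cxy]; first exact: reduced_behead red_yr.
by rewrite /= cxy.
Qed.

Lemma foldr_fpush_reduced t l : reduced t -> reduced (foldr (@fpush _) t l).
Proof. by move=> red_t; elim: l => //= x l; apply: fpush_reduced. Qed.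

Lemma freduce_reduced s : reduced (freduce s).
Proof. exact: foldr_fpush_reduced. Qed.

Lemma freduce_id s : reduced s -> freduce s = s.
Proof.
elim: s => //= x s IHs red_xs; rewrite IHs; last exact: reduced_behead red_xs.
by case: s {IHs} red_xs => //= y r /andP[/negbTE->].
Qed.

Lemma fpushK x t : reduced t -> fpush x (fpush (letter_inv x) t) = t.
Proof.
case: x => a b; case: t => [|[c d] r] /=; first by rewrite eqxx; case: b.
case: ifP => [/andP[/eqP-> dNb]|_ _]; last by rewrite /= eqxx; case: b.
have -> : d = b by move: dNb; case: b; case: d.
by case: r => [|z r] //= /andP[/negbTE->].
Qed.

Lemma foldr_fpush t x r : reduced t ->
  foldr (@fpush _) t (fpush x r) = fpush x (foldr (@fpush _) t r).
Proof.
move=> red_t; case: r => [|y r] //=; case: ifP => // /andP[/eqP y1 y2].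
have -> : y = letter_inv x by case: x y y1 y2 => a b [c d] /= -> ; case: b; case: d.
by rewrite fpushK // foldr_fpush_reduced.
Qed.

Lemma freduce_cat l r : freduce (l ++ r) = foldr (@fpush _) (freduce r) l.
Proof. by rewrite /freduce foldr_cat. Qed.

Lemma freduce_catl l r : freduce (freduce l ++ r) = freduce (l ++ r).
Proof.
rewrite !freduce_cat; elim: l => //= x l <-.
by rewrite foldr_fpush // freduce_reduced.
Qed.

Lemma freduce_catr l r : freduce (l ++ freduce r) = freduce (l ++ r).
Proof. by rewrite !freduce_cat freduce_id // freduce_reduced. Qed.

Lemma freduce_catm l m r : freduce (l ++ freduce m ++ r) = freduce (l ++ m ++ r).
Proof. by rewrite -freduce_catr freduce_catl freduce_catr. Qed.

Lemma finv_cons a (e : seq Gamma) : Defs.finv (a :: e) = Defs.finv e ++ [:: (a, true)].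
Proof. by rewrite /Defs.finv rev_cons map_rcons cats1. Qed.

Lemma finv_cat (a b : seq Gamma) : Defs.finv (a ++ b) = Defs.finv b ++ Defs.finv a.
Proof. by rewrite /Defs.finv rev_cat map_cat. Qed.

Lemma fword_cat (a b : seq Gamma) : fword (a ++ b) = fword a ++ fword b.
Proof. exact: map_cat. Qed.

Lemma freduce_fwordK l (e : seq Gamma) r :
  freduce (l ++ fword e ++ Defs.finv e ++ r) = freduce (l ++ r).
Proof.
rewrite -freduce_catr -[RHS]freduce_catr; congr freduce; congr (l ++ _).
elim: e r => //= a e IHe r; rewrite finv_cons -catA /= IHe.
exact: (fpushK (a, false) (freduce_reduced r)).
Qed.

Lemma freduce_finvK l (e : seq Gamma) r :
  freduce (l ++ Defs.finv e ++ fword e ++ r) = freduce (l ++ r).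
Proof.
rewrite -freduce_catr -[RHS]freduce_catr; congr freduce; congr (l ++ _).
elim: e r => //= a e IHe r; rewrite finv_cons -catA /= freduce_cat /=.
by rewrite (fpushK (a, true)) ?freduce_reduced // -freduce_cat.
Qed.

Lemma Delta_catl (a X Y : seq Gamma) : Delta (a ++ X) (a ++ Y) = Delta X Y.
Proof. by rewrite /Delta finv_cat fword_cat -catA freduce_finvK. Qed.

Lemma Delta_catr (X Y X' Y' e g : seq Gamma) :
  Delta (X ++ e) (Y ++ g) = Delta (X' ++ e) (Y' ++ g) -> Delta X Y = Delta X' Y'.
Proof.
have unpad A B : Delta A B = freduce (fword e ++ Delta (A ++ e) (B ++ g) ++ Defs.finv g).
  rewrite /Delta freduce_catm finv_cat fword_cat -!catA -[fword e ++ _]cat0s.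
  by rewrite freduce_fwordK /= catA -[Defs.finv g]cats0 freduce_fwordK cats0.
by move=> eq_Delta; rewrite unpad [RHS]unpad eq_Delta.
Qed.

End FreeReduction.

Section CommonPrefix.
Variable Gamma : finType.
Implicit Types a b : seq Gamma.

Fixpoint lcp_rest a b : seq Gamma * seq Gamma :=
  match a, b with
  | x :: a', y :: b' => if x == y then lcp_rest a' b' else (a, b)
  | _, _ => (a, b)
  end.

Definition distinct_heads (p : seq Gamma * seq Gamma) :=
  if p is (x :: _, y :: _) then x != y else true.

Lemma lcp_restP a b : exists s, a = s ++ (lcp_rest a b).1 /\ b = s ++ (lcp_rest a b).2.
Proof.
elim: a b => [|x a IHa] [|y b] /=; try by exists [::].
case: eqP => [<-|_]; last by exists [::].
by have [s [ea eb]] := IHa b; exists (x :: s); rewrite /= -ea -eb.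
Qed.

Lemma lcp_rest_heads a b : distinct_heads (lcp_rest a b).
Proof. by elim: a b => [|x a IHa] [|y b] //=; case: eqP => [_|/eqP]. Qed.

Lemma lcp_restC a b : lcp_rest b a = ((lcp_rest a b).2, (lcp_rest a b).1).
Proof. by elim: a b => [|x a IHa] [|y b] //=; rewrite eq_sym; case: eqP. Qed.

Lemma freduce_fword b : freduce (fword b) = fword b.
Proof. by elim: b => //= y b ->; case: b => //= z b; rewrite andbF. Qed.

Lemma foldr_fpush_finv a x t :
  foldr (@fpush _) ((x, true) :: t) (Defs.finv a) = Defs.finv a ++ (x, true) :: t.
Proof.
by rewrite /Defs.finv; elim: (rev a) => //= y r ->; case: r => [|? ?] /=; rewrite andbF.
Qed.

Lemma Delta_distinct_heads a b :
  distinct_heads (a, b) -> Delta a b = Defs.finv a ++ fword b.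
Proof.
rewrite /Delta freduce_cat freduce_fword; case: a => [|x a] //= hd.
rewrite finv_cons foldr_cat /=.
have -> : fpush (x, true) (fword b) = (x, true) :: fword b.
  by case: b hd => //= y b; rewrite andbT eq_sym => /negbTE->.
by rewrite foldr_fpush_finv -catA.
Qed.

Lemma Delta_lcp_rest a b :
  Delta a b = Defs.finv (lcp_rest a b).1 ++ fword (lcp_rest a b).2.
Proof.
have [s [ea eb]] := lcp_restP a b.
move: ea eb (lcp_rest_heads a b); case: (lcp_rest a b) => P Q /= -> -> hd.
by rewrite Delta_catl Delta_distinct_heads.
Qed.

Lemma finv_fword_inj (P Q P' Q' : seq Gamma) :
  Defs.finv P ++ fword Q = Defs.finv P' ++ fword Q' -> P = P' /\ Q = Q'.
Proof.
pose letters (sgn : bool) (s : seq (fletter Gamma)) := [seq z.1 | z <- s & z.2 == sgn].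
have lettersE sgn (R S : seq Gamma) :
    letters sgn (Defs.finv R ++ fword S) = if sgn then rev R else S.
  rewrite /letters /Defs.finv /fword.
  by case: sgn; elim: (rev R) => [|y r IHr] /=; rewrite ?IHr //; elim: S => //= z t ->.
move=> eq_PQ; have := congr1 (letters true) eq_PQ; have := congr1 (letters false) eq_PQ.
by rewrite !lettersE => -> /(congr1 rev); rewrite !revK.
Qed.

Lemma Delta_inj a b a' b' : Delta a b = Delta a' b' -> lcp_rest a b = lcp_rest a' b'.
Proof.
rewrite !Delta_lcp_rest => /finv_fword_inj[].
by case: (lcp_rest a b) => ? ? /= -> ->; case: (lcp_rest a' b').
Qed.

Lemma Delta_swap a b a' b' : Delta a b = Delta a' b' -> Delta b a = Delta b' a'.
Proof.
by move/Delta_inj => eq_lcp; rewrite !Delta_lcp_rest (lcp_restC a) (lcp_restC a') eq_lcp.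
Qed.

End CommonPrefix.

Definition wpow (T : Type) (n : nat) (v : seq T) : seq T := flatten (nseq n v).

Section WordPowers.
Variable T : Type.
Implicit Types a b v Q : seq T.

Lemma wpowS n v : wpow n.+1 v = v ++ wpow n v.
Proof. by []. Qed.

Lemma wpowD m n v : wpow (m + n) v = wpow m v ++ wpow n v.
Proof. by rewrite /wpow nseqD flatten_cat. Qed.

Lemma wpowSr n v : wpow n.+1 v = wpow n v ++ v.
Proof. by rewrite -addn1 wpowD /wpow /= cats0. Qed.

Lemma wpowM m n v : wpow (m * n) v = wpow n (wpow m v).
Proof. by elim: n => [|n IHn]; rewrite ?muln0 // mulnS wpowD IHn. Qed.

Lemma size_wpow n v : size (wpow n v) = n * size v.
Proof. by elim: n => //= n IHn; rewrite size_cat IHn mulSn. Qed.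

Lemma wpow_conjugate m a b Q : Q ++ b = a ++ Q -> Q ++ wpow m b = wpow m a ++ Q.
Proof.
move=> conj_ab; elim: m => [|m IHm] /=; first by rewrite cats0.
by rewrite catA conj_ab -catA IHm catA.
Qed.

(* Comparing prefixes of length [size Q + size a] in [Q b^N = a^N Q] for a
   large multiple [N] of [p]. *)
Lemma wpow_conjugate_root p a b Q : 0 < p -> size a = size b ->
  Q ++ wpow p b = wpow p a ++ Q -> Q ++ b = a ++ Q.
Proof.
move=> p_gt0 size_ab conj_p.
have [/size0nil a0|a_gt0] := posnP (size a).
  by move: size_ab; rewrite a0 => /esym/size0nil->; rewrite cats0.
set N := p * (size Q).+1.
have conj_N : Q ++ wpow N b = wpow N a ++ Q by rewrite /N !wpowM; apply: wpow_conjugate.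
have N_eq : N = N.-1.+1 by rewrite prednK // muln_gt0 p_gt0.
have long_aN : size Q + size a <= size (wpow N a) by rewrite size_wpow /N; nia.
have take_Qb : take (size Q + size a) (Q ++ wpow N b) = Q ++ b.
  by rewrite take_cat ltnNge leq_addr /= addKn N_eq wpowS size_ab take_size_cat.
have take_Q : take (size Q) (Q ++ wpow N b) = Q by rewrite take_size_cat.
rewrite conj_N takel_cat // in take_Qb.
rewrite conj_N takel_cat in take_Q; last by apply: leq_trans long_aN; rewrite leq_addr.
rewrite -take_Qb -{2}take_Q.
have -> : a ++ take (size Q) (wpow N a) = take (size a + size Q) (a ++ wpow N a).
  by rewrite take_cat ltnNge leq_addr /= addKn.
by rewrite -wpowS wpowSr takel_cat // addnC.
Qed.

End WordPowers.

Section Period.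
Variable Gamma : finType.
Implicit Types A B a b : seq Gamma.

Lemma Delta_prefix_period p s Q a b : 0 < p -> size a = size b ->
  s ++ Q ++ wpow p b = (s ++ wpow p a) ++ Q -> Delta (s ++ a) (s ++ Q ++ b) = Delta s (s ++ Q).
Proof.
move=> p_gt0 size_ab; rewrite -catA => /List.app_inv_head.
move/(wpow_conjugate_root p_gt0 size_ab)->.
by rewrite catA -{1}[s ++ a]cats0 Delta_catl -{1}[s]cats0 Delta_catl.
Qed.

Lemma Delta_wpow_period p A B a b : 0 < p ->
  Delta A B = Delta (A ++ wpow p a) (B ++ wpow p b) -> Delta (A ++ a) (B ++ b) = Delta A B.
Proof.
move=> p_gt0 /Delta_inj eq_lcp.
have [s [eA eB]] := lcp_restP A B.
have [s' [eA' eB']] := lcp_restP (A ++ wpow p a) (B ++ wpow p b).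
rewrite -eq_lcp {eq_lcp} in eA' eB'; move: (lcp_rest_heads A B) eA eB eA' eB'.
case: (lcp_rest A B) => P Q /= hd -> -> {A B}; rewrite -!catA => eA' eB'.
have /eqP size_sa := congr1 size eA'; have /eqP size_sb := congr1 size eB'.
rewrite !size_cat !size_wpow in size_sa size_sb.
have size_ab : size a = size b.
  by apply/eqP; rewrite -(eqn_pmul2l p_gt0); move: size_sa size_sb => /eqP + /eqP; lia.
have [/size0nil a0|a_gt0] := posnP (size a).
  by move: size_ab; rewrite a0 => /esym/size0nil->; rewrite !cats0.
have pa_gt0 : 0 < p * size a by rewrite muln_gt0 p_gt0.
have lt_ss' : size s < size s' by move: size_sa => /eqP; lia.
clear size_sa size_sb.
have [P0|Q0] : P = [::] \/ Q = [::].
  case: P Q hd eA' eB' => [|x P] [|y Q] /= xNy eA' eB'; [by left|by left|by right|].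
  have nth_s' (R R' : seq Gamma) z : s ++ z :: R = s' ++ R' -> nth x s' (size s) = z.
    by move/(congr1 (nth x ^~ (size s))); rewrite !nth_cat ltnn subnn lt_ss'.
  by move: (nth_s' _ _ _ eB'); rewrite (nth_s' _ _ _ eA') => xy; rewrite xy eqxx in xNy.
- move: eA' eB'; rewrite P0 !cats0 => <- eB'.
  exact: Delta_prefix_period p_gt0 size_ab eB'.
- move: eA' eB'; rewrite Q0 !cats0 => eA' eB'; rewrite -eB' in eA'.
  by apply: Delta_swap; apply: Delta_prefix_period p_gt0 (esym size_ab) eA'.
Qed.

Lemma Delta_twins_of_collision (u1 u2 v1 v2 : seq Gamma) c c' : c < c' ->
  Delta (u1 ++ wpow c v1) (u2 ++ wpow c v2) = Delta (u1 ++ wpow c' v1) (u2 ++ wpow c' v2) ->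
  Delta u1 u2 = Delta (u1 ++ v1) (u2 ++ v2).
Proof.
move=> lt_cc'; rewrite -(subnKC (ltnW lt_cc')) !wpowD !catA.
move/(Delta_wpow_period _); rewrite subn_gt0 => /(_ lt_cc').
by rewrite -!catA -!wpowSr !wpowS !catA => /Delta_catr.
Qed.

End Period.

Section Runs.
Variables (Sigma Gamma : finType) (T : transducer Sigma Gamma).
Implicit Types (p q r s : state T) (z : seq Sigma) (w X : seq Gamma).

Lemma run_cat p q r z z' w w' : run p z w q -> run q z' w' r -> run p (z ++ z') (w ++ w') r.
Proof.
elim=> // {}p a w0 {}q {}z {}w r0 pq _ IH qr.
by rewrite -catA; apply: run_cons pq (IH qr).
Qed.

Lemma run_wpow q z w n : run q z w q -> run q (wpow n z) (wpow n w) q.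
Proof. by move=> loop; elim: n => [|n IHn]; [apply: run_nil | apply: run_cat loop IHn]. Qed.

Lemma run_consE p r a z w : run p (a :: z) w r ->
  exists w0 q w', [/\ (p, a, w0, q) \in trans T, run q z w' r & w = w0 ++ w'].
Proof. by move=> pr; inversion pr; subst; do 3 eexists; split; eauto. Qed.

Lemma run_catE p r z z' w : run p (z ++ z') w r ->
  exists w1 w2 q, [/\ run p z w1 q, run q z' w2 r & w = w1 ++ w2].
Proof.
elim: z p w => [|a z IHz] p w /= pr; first by exists [::], w, p; split; first exact: run_nil.
have [w0 [q [w' [pq qr ->]]]] := run_consE pr.
have [w1 [w2 [m [qm mr ->]]]] := IHz _ _ qr.
by exists (w0 ++ w1), w2, m; rewrite catA; split => //; apply: run_cons pq qm.
Qed.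

Lemma sequential_init_eq i i' : sequential T -> i \in init T -> i' \in init T -> i = i'.
Proof. by case=> /eqP/cards1P[i0 ->] _; rewrite !inE => /eqP-> /eqP->. Qed.

Lemma sequential_run_det p q q' z w w' : sequential T ->
  run p z w q -> run p z w' q' -> w = w' /\ q = q'.
Proof.
move=> [_ det] pq; elim: pq q' w' => [{}p|{}p a w0 {}q {}z w1 r pq _ IH] q' w' pq'.
  by inversion pq'.
have [w0' [q1 [w1' [pq1 q1q' ->]]]] := run_consE pq'.
case: (det _ _ pq pq1 erefl erefl) => <- eq_q; rewrite -eq_q in q1q'.
by case: (IH _ _ q1q') => -> ->.
Qed.

Definition sem_from s z X := exists w t, [/\ run s z w t, t \in final T & X = w ++ fout t].

Lemma sequential_sem_from_det s z X X' : sequential T ->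
  sem_from s z X -> sem_from s z X' -> X = X'.
Proof.
move=> seqT [w [t [st _ ->]]] [w' [t' [st' _ ->]]].
by case: (sequential_run_det seqT st st') => -> ->.
Qed.

Lemma sequential_Delta_sem_cat z z1 z2 w1 w2 : sequential T ->
  sem T (z ++ z1) w1 -> sem T (z ++ z2) w2 ->
  exists s X1 X2, [/\ sem_from s z1 X1, sem_from s z2 X2 & Delta w1 w2 = Delta X1 X2].
Proof.
move=> seqT [i1 [t1 [o1 [i1_init t1_fin run1 ->]]]] [i2 [t2 [o2 [i2_init t2_fin run2 ->]]]].
have [o [y1 [s [i1s st1 ->]]]] := run_catE run1.
have [o' [y2 [s' [i2s st2 ->]]]] := run_catE run2.
rewrite (sequential_init_eq seqT i2_init i1_init) in i2s.
have [<- eq_s] := sequential_run_det seqT i1s i2s; rewrite -eq_s in st2.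
exists s, (y1 ++ fout t1), (y2 ++ fout t2); split; [by exists y1, t1 | by exists y2, t2 |].
by rewrite -!catA Delta_catl.
Qed.

End Runs.

Lemma leq_card_rel (A B : finType) (R : A -> B -> Prop) :
  (forall a, exists b, R a b) -> (forall a a' b, R a b -> R a' b -> a = a') -> #|A| <= #|B|.
Proof.
move=> R_total R_inj.
pose f a := sval (ClassicalEpsilon.constructive_indefinite_description _ (R_total a)).
have Rf a : R a (f a) := svalP (ClassicalEpsilon.constructive_indefinite_description _ _).
by apply: (@leq_card _ _ f) => a a' fa; apply: R_inj (Rf a) _; rewrite fa.
Qed.

Lemma pigeonhole_rel n (R : 'I_n.+1 -> 'I_n -> Prop) :
  (forall j, exists k, R j k) -> exists (j j' : 'I_n.+1) k, [/\ j < j', R j k & R j' k].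
Proof.
move=> R_total; apply: Classical_Prop.NNPP => no_pair.
suff R_inj j j' k : R j k -> R j' k -> j = j'.
  by have := leq_card_rel R_total R_inj; rewrite !card_ord ltnn.
move=> Rj Rj'.
case: (ltngtP j j') => [lt_jj'|lt_j'j|/val_inj //]; case: no_pair.
- by exists j, j', k.
- by exists j', j, k.
Qed.

Definition pumped (A : Type) (a b : seq A) (c : nat -> nat) (i m : nat) : seq A :=
  flatten [seq a ++ wpow (c k) b | k <- iota i m].

Lemma pumped_split (A : Type) (a b : seq A) c j j' : j < j' ->
  pumped a b c 0 j' = pumped a b c 0 j ++ (a ++ wpow (c j) b) ++ pumped a b c j.+1 (j' - j.+1).
Proof.
by move=> lt_jj'; rewrite /pumped -{1}(subnKC lt_jj') addSnnS iotaD map_cat flatten_cat.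
Qed.

Lemma eq_pumped (A : Type) (a b : seq A) c c' i m :
  (forall k, i <= k < i + m -> c k = c' k) -> pumped a b c i m = pumped a b c' i m.
Proof. by move=> eq_c; congr flatten; apply/eq_in_map => k; rewrite mem_iota => /eq_c->. Qed.

Section Pumping.
Variables (Sigma Gamma : finType) (T : transducer Sigma Gamma).
Variables (i0 q1 q2 t : state T) (x u v y : seq Sigma) (al u1 u2 v1 v2 be : seq Gamma).
Hypotheses (i0_init : i0 \in init T) (t_final : t \in final T).
Hypotheses (run_x : run i0 x al q1) (loop_u : run q1 u u1 q1) (loop_v : run q1 v v1 q1).
Hypotheses (run_u : run q1 u u2 q2) (loop_v' : run q2 v v2 q2) (run_y : run q2 y be t).
Variables (n : nat) (Ts : 'I_n -> transducer Sigma Gamma).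
Hypotheses (Ts_sequential : forall k, sequential (Ts k)).
Hypothesis sem_cover : forall z w, sem T z w -> exists k, sem (Ts k) z w.

Definition loop_delay c := Delta (u1 ++ wpow c v1) (u2 ++ wpow c v2).

(* The words x (u v^(c 0)) ... (u v^(c (j-1))) u v^(c j) y: the first [j]
   blocks loop on [q1], the last one moves to [q2]. *)
Definition pump_prefix c j := x ++ pumped u v c 0 j ++ (u ++ wpow (c j) v).
Definition pump_in c j := pump_prefix c j ++ y.
Definition pump_out c j := al ++ pumped u1 v1 c 0 j ++ (u2 ++ wpow (c j) v2) ++ (be ++ fout t).
Definition pump_mid c j j' := pumped u v c j.+1 (j' - j.+1) ++ (u ++ wpow (c j') v) ++ y.
Definition pump_out_tail c j j' :=
  pumped u1 v1 c j.+1 (j' - j.+1) ++ (u2 ++ wpow (c j') v2) ++ (be ++ fout t).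

Lemma run_pumped c i m : run q1 (pumped u v c i m) (pumped u1 v1 c i m) q1.
Proof.
elim: m i => [|m IHm] i; first exact: run_nil.
exact: run_cat (run_cat loop_u (run_wpow _ loop_v)) (IHm _).
Qed.

Lemma sem_pump c j : sem T (pump_in c j) (pump_out c j).
Proof.
exists i0, t, (al ++ pumped u1 v1 c 0 j ++ (u2 ++ wpow (c j) v2) ++ be).
split => //; last by rewrite /pump_out !catA.
rewrite /pump_in /pump_prefix -!catA.
apply: run_cat run_x (run_cat (run_pumped _ _ _) (run_cat run_u _)).
exact: run_cat (run_wpow _ loop_v') run_y.
Qed.

Lemma pump_in_split c j j' : j < j' -> pump_in c j' = pump_prefix c j ++ pump_mid c j j'.
Proof.
by move=> lt_jj'; rewrite /pump_in /pump_prefix /pump_mid (pumped_split _ _ _ lt_jj') -!catA.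
Qed.

Lemma Delta_pump_out c j j' : j < j' ->
  Delta (pump_out c j') (pump_out c j) =
  Delta ((u1 ++ wpow (c j) v1) ++ pump_out_tail c j j')
        ((u2 ++ wpow (c j) v2) ++ (be ++ fout t)).
Proof.
move=> lt_jj'; rewrite /pump_out (pumped_split _ _ _ lt_jj') -!catA.
by rewrite !(catA al) Delta_catl !catA.
Qed.

Section Witness.
Variable M : nat.
Implicit Type cs : {ffun 'I_n.+1 -> 'I_M}.

Definition exponents cs (i : nat) : nat := cs (inord i).

(* [d = (j, j', s, rest)] records that [pump_in c j] and [pump_in c j'] are
   handled by the same [Ts k] in the state [s] after their common prefix,
   together with all exponents but the [j]-th one. *)
Definition pump_witness cs
    (d : 'I_n.+1 * 'I_n.+1 * {k : 'I_n & state (Ts k)} * {ffun 'I_n -> 'I_M}) :=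
  let: (j, j', s, rest) := d in let c := exponents cs in
  [/\ j < j', rest = [ffun i => cs (lift j i)] &
      exists X1 X2, [/\ sem_from (tagged s) (pump_mid c j j') X2, sem_from (tagged s) y X1
                      & Delta (pump_out c j') (pump_out c j) = Delta X2 X1]].

Lemma pump_witness_exists cs : exists d, pump_witness cs d.
Proof.
set c := exponents cs.
have [j [j' [k [lt_jj' semj semj']]]] := pigeonhole_rel (fun j => sem_cover (sem_pump c j)).
rewrite (pump_in_split _ lt_jj') in semj'.
have [s [X2 [X1 [sX2 sX1 eq_Delta]]]] :=
  sequential_Delta_sem_cat (Ts_sequential k) semj' semj.
exists (j, j', Tagged (fun k => state (Ts k)) s, [ffun i => cs (lift j i)]).
by split=> //; exists X1, X2.
Qed.

Lemma pump_witness_inj cs1 cs2 d : injective (fun e : 'I_M => loop_delay e) ->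
  pump_witness cs1 d -> pump_witness cs2 d -> cs1 = cs2.
Proof.
move=> delay_inj; case: d => [[[j j'] [k s]] rest] /=.
move=> [lt_jj' -> [X1 [X2 [sX2 sX1 eq1]]]] [_ eq_rest [X1' [X2' [sX2' sX1' eq2]]]].
have off_j i : i != j -> cs1 i = cs2 i.
  case: (unliftP j i) => [i' ->|->]; last by rewrite eqxx.
  by move=> _; move/ffunP/(_ i'): eq_rest; rewrite !ffunE.
have eq_c i : j < i <= j' -> exponents cs1 i = exponents cs2 i.
  case/andP=> lt_ji le_ij'; rewrite /exponents off_j // -val_eqE /= inordK ?gtn_eqF //.
  exact: leq_ltn_trans le_ij' (ltn_ord _).
have eq_c_mid i : j.+1 <= i < j.+1 + (j' - j.+1) -> exponents cs1 i = exponents cs2 i.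
  by rewrite subnKC // => /andP[lt_ji lt_ij']; apply: eq_c; rewrite lt_ji ltnW.
have eq_mid : pump_mid (exponents cs1) j j' = pump_mid (exponents cs2) j j'.
  by rewrite /pump_mid (eq_c j') ?lt_jj' ?leqnn // (eq_pumped _ _ eq_c_mid).
have eq_tail : pump_out_tail (exponents cs1) j j' = pump_out_tail (exponents cs2) j j'.
  by rewrite /pump_out_tail (eq_c j') ?lt_jj' ?leqnn // (eq_pumped _ _ eq_c_mid).
rewrite eq_mid in sX2.
rewrite (sequential_sem_from_det (Ts_sequential k) sX2' sX2) in eq2.
rewrite (sequential_sem_from_det (Ts_sequential k) sX1' sX1) -eq1 in eq2.
move: eq2; rewrite !Delta_pump_out // eq_tail => /Delta_catr.
rewrite /exponents !inord_val => /delay_inj eq_j.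
by apply/ffunP => i; case: (eqVneq i j) => [->|/off_j].
Qed.

End Witness.

Lemma loop_delay_collision : exists c c', c < c' /\ loop_delay c = loop_delay c'.
Proof.
pose S := #|{: {k : 'I_n & state (Ts k)}}|; pose M := (n.+1 * n.+1 * S).+1.
have /injectivePn[c [c' neq_cc' eq_delay]] : ~~ injectiveb (fun c : 'I_M => loop_delay c).
  apply/injectiveP => delay_inj.
  have := leq_card_rel (@pump_witness_exists M) (fun _ _ _ => pump_witness_inj delay_inj).
  by rewrite !card_ffun !card_prod !card_ffun !card_ord -/S expnS leq_pmul2r ?expn_gt0 // ltnn.
case: (ltngtP c c') => [lt_cc'|lt_c'c|/val_inj eq_cc']; last by rewrite eq_cc' eqxx in neq_cc'.
- by exists c, c'.
- by exists c', c.
Qed.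

End Pumping.

Theorem lemma3 (Sigma Gamma : finType) (T : transducer Sigma Gamma) :
  trim T -> multi_sequential (sem T) -> weak_twinning T.
Proof.
move=> trimT [n [Rs [Rs_seq sem_Rs]]] q1 q2 u v u1 u2 v1 v2 loop_u loop_v run_u loop_v'.
have [i0 [_ [x [al [_ [_ [i0_init _ run_x _]]]]]]] := trimT q1.
have [_ [t [_ [_ [y [be [_ t_final _ run_y]]]]]]] := trimT q2.
pose choose k := ClassicalEpsilon.constructive_indefinite_description _ (Rs_seq k).
have Ts_sequential k : sequential (sval (choose k)) := (svalP (choose k)).1.
have sem_cover z w : sem T z w -> exists k, sem (sval (choose k)) z w.
  by case/sem_Rs => k /((svalP (choose k)).2); exists k.
have [c [c' [lt_cc' eq_delay]]] := loop_delay_collision i0_init t_final run_x loop_u loop_v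
  run_u loop_v' run_y Ts_sequential sem_cover.
exact: Delta_twins_of_collision lt_cc' eq_delay.
Qed.
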